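(* Let $N,M$ be positive integers with $\gcd(N,M)=1$, let $(I_n^t,V_n^t)$ be a solution of hpdToda with smooth spectral curve $C$, and let $(g_1,\dots,g_N)^T$ be an eigenvector of $X=X_t(y)$ with eigenvalue $x$, $(x,y)\in C$. Then: (i) if $k$ is the local coordinate around $P$ with $x=k^{-M}+\cdots$, $y=k^{-N}+\cdots$, then $g_i/g_N=k^{N-i}+\cdots$ for $i=1,\dots,N-1$; (ii) if $k$ is a local coordinate around $Q$, then $g_i/g_N\sim k^{-N+i}$ for $i=1,\dots,N-1$.
   Context: hpdToda: for all $n,t\in\mathbb{Z}$, $I_n^{t+M}=I_n^t+V_n^t-V_{n-1}^{t+1}$, $V_n^{t+1}=I_{n+1}^tV_n^t/I_n^{t+M}$, $I_{n+N}^t=I_n^t$, $V_{n+N}^t=V_n^t$, with $\prod_{n=1}^N I_n^t\neq\prod_{n=1}^N V_n^t$. $L_t(y)$: $N\times N$ matrix with $1$ on the diagonal, $(L_t)_{i+1,i}=V_i^t$ ($1\le i\le N-1$), $(L_t)_{1,N}=V_N^t/y$, zeros elsewhere; $R_t(y)$: $(R_t)_{i,i}=I_i^t$, $(R_t)_{i,i+1}=1$, $(R_t)_{N,1}=y$, zeros elsewhere; $X_t(y)=L_t(y)R_{t+M-1}(y)\cdots R_t(y)$. The spectral curve $C$ is the (assumed smooth) completion of $\det(X_t(y)-xE)=0$. $C$ contains the point $P=(x,y)=(\infty,\infty)$, around which there is a local coordinate $k$ with $x=k^{-M}+\cdots$, $y=k^{-N}+\cdots$, and the point $Q=(\infty,0)$,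 around which there is a local coordinate $k$ with $x=\mathcal{E}k^{-1}+\cdots$, $y=k^N+\cdots$, where $\mathcal{E}=\prod_{n=1}^N\prod_{j=0}^{M-1}I_n^j\cdot\prod_{n=1}^NV_n^0$. The ratios $g_i/g_N$ are meromorphic functions on $C$. For meromorphic $f,h$ and $p\in C$, ''$f\sim h$ around $p$'' means $0<\lim_{z\to p}|f(z)/h(z)|<+\infty$; ''$=k^a+\cdots$'' means the Laurent expansion in $k$ has leading term $k^a$. *)

From HB Require Import structures.
From mathcomp Require Import all_boot all_order all_algebra.
From mathcomp Require Import complex.
From mathcomp Require Import reals.
Set Implicit Arguments. Unset Strict Implicit. Unset Printing Implicit Defensive.
Import Order.TTheory GRing.Theory Num.Theory.
Local Open Scope ring_scope.
Local Open Scope complex_scope.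

Section Toda.
Variable R : realType.
Local Notation C := (R[i]).

Definition hpdToda (N M : nat) (I V : int -> int -> C) : Prop :=
  [/\ forall n t : int, I n (t + M%:Z) = I n t + V n t - V (n - 1) (t + 1),
      forall n t : int, V n (t + 1) = I (n + 1) t * V n t / I n (t + M%:Z),
      forall n t : int, I (n + N%:Z) t = I n t,
      forall n t : int, V (n + N%:Z) t = V n t &
      forall t : int, \prod_(i < N) I (i.+1)%:Z t != \prod_(i < N) V (i.+1)%:Z t].

(* Row/column index i : 'I_N stands for the paper's index i+1 in {1..N}. *)
Definition Lmat (N : nat) (V : int -> int -> C) (t : int) (y : C) : 'M[C]_N :=
  \matrix_(i < N, j < N)
    ((i == j)%:R
     + (i == j.+1 :> nat)%:R * V (j.+1)%:Z t
     + ((i == 0 :> nat) && (j == N.-1 :> nat))%:R * (V N%:Z t / y)).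

Definition Rmat (N : nat) (I : int -> int -> C) (t : int) (y : C) : 'M[C]_N :=
  \matrix_(i < N, j < N)
    ((i == j)%:R * I (i.+1)%:Z t
     + (j == i.+1 :> nat)%:R
     + ((i == N.-1 :> nat) && (j == 0 :> nat))%:R * y).

Fixpoint Rprod (N : nat) (I : int -> int -> C) (t : int) (m : nat) (y : C)
  : 'M[C]_N :=
  match m with
  | 0 => 1%:M
  | m'.+1 => Rmat N I (t + m'%:Z) y *m Rprod N I t m' y
  end.

Definition Xmat (N M : nat) (I V : int -> int -> C) (t : int) (y : C)
  : 'M[C]_N := Lmat N V t y *m Rprod N I t M y.

Definition specF (N M : nat) (I V : int -> int -> C) (t : int) (x y : C) : C :=
  \det (Xmat N M I V t y - x%:M).

Definition lim_at0 (f : C -> C) (l : C) : Prop :=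
  forall e : C, 0 < e -> exists2 d : C, 0 < d &
    forall k : C, 0 < `|k| < d -> `|f k - l| < e.

Definition has_cderiv (f : C -> C) (z0 l : C) : Prop :=
  lim_at0 (fun h => (f (z0 + h) - f z0) / h) l.

Definition near0 (P : C -> Prop) : Prop :=
  exists2 d : C, 0 < d & forall k : C, 0 < `|k| < d -> P k.

Definition affine_smooth (F : C -> C -> C) : Prop :=
  forall x0 y0 : C, y0 != 0 -> F x0 y0 = 0 ->
    ~ (has_cderiv (fun x => F x y0) x0 0 /\ has_cderiv (fun y => F x0 y) y0 0).

Definition eigvec_near0 (N M : nat) (I V : int -> int -> C) (t : int)
  (x y : C -> C) (g : C -> 'cV[C]_N) : Prop :=
  near0 (fun k => g k != 0 /\ Xmat N M I V t (y k) *m g k = x k *: g k).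

End Toda.

(* the last index N-1 of 'I_N (the paper's index N); needs an inhabitant of 'I_N *)
Lemma pred_lt_ord (N : nat) (j : 'I_N) : (N.-1 < N)%N.
Proof. by case: N j => [[]|n _]. Qed.
Definition ord_last (N : nat) (j : 'I_N) : 'I_N := Ordinal (pred_lt_ord j).

From HB Require Import structures.
From mathcomp Require Import all_boot all_order all_algebra.
From mathcomp Require Import complex.
From mathcomp Require Import reals.
From mathcomp Require Import ring lra.
Import Order.TTheory GRing.Theory Num.Theory Normc.
Set Implicit Arguments. Unset Strict Implicit.
Local Open Scope ring_scope.
Local Open Scope complex_scope.

(* Near P conjugate the eigen-equation X g = x g by diag(k^(i+1)) and
   multiply it by k^M; near Q conjugate by diag(k^-(i+1)) and multiply by k.  The
   rescaled Lax matrix tends, as k -> 0, to a matrix supported on the graph of the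
   shift i -> i + m of Z/N (m = M near P, m = N - 1 near Q), while the rescaled
   eigenvalue tends to a nonzero limit; since gcd(N, m) = 1 the shift is a single
   N-cycle.  Along such a cycle every component |w_i| of the rescaled eigenvector is
   controlled by |w_(p i)| up to an error proportional to the perturbation, so going
   round the cycle shows that the last component dominates.  The ratios w_i / w_N
   then converge, one step of the cycle at a time, to nonzero limits; near P the
   limit matrix is the permutation matrix of the shift and all limits are 1. *)

Lemma ler_sum_term (R : numDomainType) (I : finType) (F : I -> R) j :
  (forall i, 0 <= F i) -> F j <= \sum_i F i.
Proof. by move=> F0; rewrite (bigD1 j) //= lerDl sumr_ge0. Qed.

Section Limits.
Variable R : realType.
Local Notation C := R[i].
Implicit Types (f g : C -> C) (l m : C) (P Q : C -> Prop).

Lemma normcE (z : C) : `|z| = (normc z)%:C.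
Proof. by []. Qed.

Lemma normc_ge0 (z : C) : 0 <= normc z.
Proof. by case: z => a b; rewrite sqrtr_ge0. Qed.

Lemma normc_eq0 (z : C) : (normc z == 0) = (z == 0).
Proof. by rewrite -(inj_eq (@complexI _)) -normcE normr_eq0. Qed.

Lemma normc_gt0 (z : C) : (0 < normc z) = (z != 0).
Proof. by rewrite lt_def normc_ge0 normc_eq0 andbT. Qed.

Lemma normcR (r : R) : normc r%:C = `|r|.
Proof. by rewrite /normc /= expr0n /= addr0 sqrtr_sqr. Qed.

Lemma distcC (z w : C) : normc (z - w) = normc (w - z).
Proof. by rewrite -normcN opprB. Qed.

Lemma normc_lerB (z w : C) : normc z <= normc w + normc (z - w).
Proof. by have := le_normcD w (z - w); rewrite addrC subrK. Qed.

Lemma normc_sum (I : finType) (F : I -> C) : normc (\sum_i F i) <= \sum_i normc (F i).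
Proof.
elim/big_ind2: _ => [|a1 a2 b1 b2 h1 h2|//]; first by rewrite normc0.
exact: le_trans (le_normcD _ _) (lerD h1 h2).
Qed.

Lemma normc_sumM_le (I : finType) (a b : I -> C) (B : R) :
  (forall j, normc (b j) <= B) -> normc (\sum_j a j * b j) <= (\sum_j normc (a j)) * B.
Proof.
move=> bB; apply: le_trans (normc_sum _) _; rewrite mulr_suml; apply: ler_sum => j _.
by rewrite normcM ler_wpM2l ?normc_ge0.
Qed.

(* Real-valued versions of [lim_at0] and [near0]: a positive complex number is a positive real. *)
Definition lim0 f l : Prop :=
  forall e : R, 0 < e -> exists2 d : R, 0 < d &
    forall k, 0 < normc k < d -> normc (f k - l) < e.

Definition ev0 P : Prop := exists2 d : R, 0 < d & forall k, 0 < normc k < d -> P k.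

Lemma gtC0_real (d : C) : 0 < d -> d = (complex.Re d)%:C /\ 0 < complex.Re d.
Proof. by case: d => a b; rewrite ltcE /= => /andP[/eqP -> h]. Qed.

Lemma lim_at0E f l : lim_at0 f l <-> lim0 f l.
Proof.
split=> [h e e0|h e /gtC0_real[-> e0]].
- have [|d /gtC0_real[dE d0] hd] := h e%:C; first by rewrite ltcR.
  exists (complex.Re d) => // k kd; rewrite -ltcR -normcE hd //.
  by rewrite dE normcE !ltcR.
- have [d d0 hd] := h _ e0; exists d%:C => [|k]; first by rewrite ltcR.
  by rewrite normcE normcE !ltcR; apply: hd.
Qed.

Lemma near0E P : near0 P <-> ev0 P.
Proof.
split=> [[d /gtC0_real[dE d0] hd]|[d d0 hd]].
- exists (complex.Re d) => // k kd; apply: hd.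
  by rewrite dE normcE !ltcR.
- exists d%:C => [|k]; first by rewrite ltcR.
  by rewrite normcE !ltcR; apply: hd.
Qed.

Lemma ev0W P Q : (forall k, P k -> Q k) -> ev0 P -> ev0 Q.
Proof. by move=> PQ [d d0 hd]; exists d => // k /hd/PQ. Qed.

Lemma ev0_all P : (forall k, P k) -> ev0 P.
Proof. by move=> hP; exists 1. Qed.

Lemma ev0_neq0 : ev0 (fun k => k != 0).
Proof. by exists 1 => // k /andP[]; rewrite normc_gt0. Qed.

Lemma ev0_and P Q : ev0 P -> ev0 Q -> ev0 (fun k => P k /\ Q k).
Proof.
move=> [d1 d1p h1] [d2 d2p h2]; exists (Num.min d1 d2); first by rewrite lt_min d1p.
move=> k /andP[k0]; rewrite lt_min => /andP[k1 k2].
by split; [apply: h1|apply: h2]; rewrite k0.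
Qed.

Lemma ev0_forall (I : finType) (P : I -> C -> Prop) :
  (forall i, ev0 (P i)) -> ev0 (fun k => forall i, P i k).
Proof.
move=> hP; suff: ev0 (fun k => forall i, i \in index_enum I -> P i k).
  by apply: ev0W => k hk i; apply: hk; rewrite mem_index_enum.
elim: (index_enum I) => [|a s IH]; first exact: ev0_all.
apply: ev0W (ev0_and (hP a) IH) => k [ha hs] i.
by rewrite inE => /predU1P[->|/hs].
Qed.

Lemma lim0_ev f g l : ev0 (fun k => f k = g k) -> lim0 g l -> lim0 f l.
Proof.
move=> fg h e e0; have [d dp hd] := ev0_and fg (h e e0).
by exists d => // k /hd [->].
Qed.

Lemma lim0_ext f g l : (forall k, k != 0 -> f k = g k) -> lim0 g l -> lim0 f l.
Proof. by move=> fg; apply: lim0_ev; apply: ev0W ev0_neq0. Qed.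

Lemma lim0_le f l (b : C -> R) : (forall e, 0 < e -> ev0 (fun k => b k < e)) ->
  ev0 (fun k => normc (f k - l) <= b k) -> lim0 f l.
Proof.
move=> hb fb e e0; have [d dp hd] := ev0_and fb (hb e e0).
by exists d => // k /hd [fbk bke]; apply: le_lt_trans fbk bke.
Qed.

Lemma lim0_cst l : lim0 (fun _ => l) l.
Proof. by move=> e e0; exists 1 => // k _; rewrite subrr normc0. Qed.

Lemma lim0_id : lim0 (fun k => k) 0.
Proof. by move=> e e0; exists e => // k /andP[_]; rewrite subr0. Qed.

Lemma lim0D f g l m : lim0 f l -> lim0 g m -> lim0 (fun k => f k + g k) (l + m).
Proof.
move=> hf hg e e0; have e2 : 0 < e / 2 by rewrite divr_gt0.
have [d dp hd] := ev0_and (hf _ e2) (hg _ e2).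
exists d => // k /hd [fl gm].
have -> : f k + g k - (l + m) = (f k - l) + (g k - m) by ring.
by apply: le_lt_trans (le_normcD _ _) _; lra.
Qed.

Lemma lim0M f g l m : lim0 f l -> lim0 g m -> lim0 (fun k => f k * g k) (l * m).
Proof.
move=> hf hg e e0; set T := 2 + normc m + normc l.
have T0 : 0 < T by have := normc_ge0 m; have := normc_ge0 l; rewrite /T; lra.
set e1 := Num.min 1 (e / T).
have e10 : 0 < e1 by rewrite lt_min ltr01 divr_gt0.
have e11 : e1 <= 1 by rewrite ge_min lexx.
have e1T : e1 * T <= e by rewrite -ler_pdivlMr // ge_min lexx orbT.
have [d dp hd] := ev0_and (hf _ e10) (hg _ e10).
exists d => // k /hd [fl gm].
have -> : f k * g k - l * m = (f k - l) * (g k - m) + (f k - l) * m + l * (g k - m) by ring.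
apply: le_lt_trans (le_normcD _ _) _; apply: le_lt_trans (lerD (le_normcD _ _) (lexx _)) _.
rewrite !normcM; have := normc_ge0 (f k - l); have := normc_ge0 (g k - m).
have := normc_ge0 m; have := normc_ge0 l; move: fl gm e1T; rewrite /T.
move: (normc (f k - l)) (normc (g k - m)) (normc m) (normc l) => *; nra.
Qed.

Lemma lim0V f l : l != 0 -> lim0 f l -> lim0 (fun k => (f k)^-1) l^-1.
Proof.
move=> l0 h e e0; set a := normc l; have a0 : 0 < a by rewrite normc_gt0.
set e1 := Num.min (a / 2) (e * a ^+ 2 / 2).
have e10 : 0 < e1 by rewrite lt_min !divr_gt0 ?exprn_gt0 ?mulr_gt0.
have e1a : e1 <= a / 2 by rewrite ge_min lexx.
have e1e : e1 <= e * a ^+ 2 / 2 by rewrite ge_min lexx orbT.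
have [d dp hd] := h _ e10; exists d => // k /hd fl.
have := normc_lerB l (f k); rewrite -/a distcC => hfa.
have fk0 : f k != 0 by rewrite -normc_gt0; lra.
have -> : (f k)^-1 - l^-1 = (l - f k) * ((f k)^-1 * l^-1) by field; rewrite fk0 l0.
rewrite !normcM !normcV distcC -/a mulrA ltr_pdivrMr // ltr_pdivrMr ?normc_gt0 //.
have : e * a ^+ 2 / 2 * 2 = e * a ^+ 2 by field.
by move: fl e1a e1e; rewrite expr2; nra.
Qed.

Lemma lim0_sum (I : finType) (F : I -> C -> C) (L : I -> C) :
  (forall i, lim0 (F i) (L i)) -> lim0 (fun k => \sum_i F i k) (\sum_i L i).
Proof.
move=> hF; elim: (index_enum I) => [|a s IH].
  by rewrite big_nil; apply: lim0_ext (lim0_cst 0) => k _; rewrite big_nil.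
by rewrite big_cons; apply: lim0_ext (lim0D (hF a) IH) => k _; rewrite big_cons.
Qed.

Lemma lim0_norm f l : lim0 f l -> lim0 (fun k => `|f k|) `|l|.
Proof.
move=> h e /h[d dp hd]; exists d => // k /hd fl.
rewrite !normcE -rmorphB normcR ltr_norml.
by have := normc_lerB (f k) l; have := normc_lerB l (f k); rewrite distcC; lra.
Qed.

Lemma lim0_unique f l m : lim0 f l -> lim0 f m -> l = m.
Proof.
move=> hl hm; apply/eqP/negPn/negP => lm.
have e0 : 0 < normc (l - m) / 2 by rewrite divr_gt0 // normc_gt0 subr_eq0.
have [d dp hd] := ev0_and (hl _ e0) (hm _ e0).
have /hd[fl fm] : 0 < normc (d / 2)%:C < d.
  by rewrite normcR ger0_norm ?divr_ge0 ?ltW // divr_gt0 //=; lra.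
have := le_normcD (l - f (d / 2)%:C) (f (d / 2)%:C - m).
by rewrite distcC in fl; rewrite addrA subrK; lra.
Qed.

Lemma lim0_indicator (b : bool) f l :
  (b -> lim0 f l) -> lim0 (fun k => b%:R * f k) (b%:R * l).
Proof.
case: b => [/(_ isT) h|_]; first by rewrite mul1r; apply: lim0_ext h => k _; rewrite mul1r.
by rewrite mul0r; apply: lim0_ext (lim0_cst 0) => k _; rewrite mul0r.
Qed.

Lemma ev0_sum_lt (I : finType) (F : I -> C -> R) :
  (forall i e, 0 < e -> ev0 (fun k => F i k < e)) ->
  forall e, 0 < e -> ev0 (fun k => \sum_i F i k < e).
Proof.
move=> hF e e0; pose n : R := #|I|%:R; have n0 : 0 <= n by apply: ler0n.
have en : 0 < e / (n + 1) by rewrite divr_gt0 // ltr_wpDl.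
apply: ev0W (ev0_forall (fun i => hF i _ en)) => k hk.
apply: (@le_lt_trans _ _ (\sum_(i : I) e / (n + 1))); first by apply: ler_sum => i _; apply: ltW.
rewrite sumr_const -mulr_natr -/n.
have -> : e / (n + 1) * n = e - e / (n + 1) by field; rewrite gt_eqF // ltr_wpDl.
by rewrite gtrBl.
Qed.

End Limits.

Arguments lim0_id {R}.
Arguments ev0_neq0 {R}.

Section MatrixLimits.
Variable R : realType.
Local Notation C := R[i].

Definition mxlim0 m n (A : C -> 'M[C]_(m, n)) (A0 : 'M[C]_(m, n)) : Prop :=
  forall i j, lim0 (fun k => A k i j) (A0 i j).

Lemma mxlim0_ext m n (A B : C -> 'M[C]_(m, n)) A0 :
  (forall k, k != 0 -> A k = B k) -> mxlim0 B A0 -> mxlim0 A A0.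
Proof. by move=> AB hB i j; apply: lim0_ext (hB i j) => k /AB ->. Qed.

Lemma mxlim0_cst m n (A0 : 'M[C]_(m, n)) : mxlim0 (fun _ => A0) A0.
Proof. by move=> i j; apply: lim0_cst. Qed.

Lemma mxlim0M m n q (A : C -> 'M[C]_(m, n)) A0 (B : C -> 'M[C]_(n, q)) B0 :
  mxlim0 A A0 -> mxlim0 B B0 -> mxlim0 (fun k => A k *m B k) (A0 *m B0).
Proof.
move=> hA hB i j; rewrite mxE.
by apply: lim0_ext (lim0_sum (fun l => lim0M (hA i l) (hB l j))) => k _; rewrite mxE.
Qed.

Definition l1dist m n (A B : 'M[C]_(m, n)) : R := \sum_i \sum_j normc (A i j - B i j).

Lemma l1dist_ge0 m n (A B : 'M[C]_(m, n)) : 0 <= l1dist A B.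
Proof. by apply: sumr_ge0 => i _; apply: sumr_ge0 => j _; apply: normc_ge0. Qed.

Lemma row_l1dist_le m n (A B : 'M[C]_(m, n)) i :
  \sum_j normc (A i j - B i j) <= l1dist A B.
Proof. by apply: ler_sum_term => i'; apply: sumr_ge0 => j _; apply: normc_ge0. Qed.

Lemma l1dist_lim0 m n (A : C -> 'M[C]_(m, n)) A0 : mxlim0 A A0 ->
  forall e, 0 < e -> ev0 (fun k => l1dist (A k) A0 < e).
Proof.
move=> hA; apply: ev0_sum_lt => i; apply: ev0_sum_lt => j e e0.
by apply: ev0W (hA i j e e0) => k.
Qed.

Fixpoint mxprod n (F : nat -> 'M[C]_n) (m : nat) : 'M[C]_n :=
  if m is m'.+1 then F m' *m mxprod F m' else 1%:M.

Lemma mxlim0_prod n (F : C -> nat -> 'M[C]_n) (F0 : nat -> 'M[C]_n) m :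
  (forall j, mxlim0 (F^~ j) (F0 j)) -> mxlim0 (fun k => mxprod (F k) m) (mxprod F0 m).
Proof.
move=> hF; elim: m => [|m IH] /=; first exact: mxlim0_cst.
exact: mxlim0M (hF m) IH.
Qed.

Lemma scale_mxprod n (c : C) (F : nat -> 'M[C]_n) m :
  c ^+ m *: mxprod F m = mxprod (fun j => c *: F j) m.
Proof.
elim: m => [|m IH] /=; first by rewrite expr0 scale1r.
by rewrite -IH exprS -scalerA scalemxAr scalemxAl.
Qed.

Definition dconj n (s : 'I_n -> C) (Y : 'M[C]_n) : 'M[C]_n :=
  \matrix_(i, j) (s i * Y i j / s j).

Definition dscale n (s : 'I_n -> C) (w : 'cV[C]_n) : 'cV[C]_n := \col_i (s i * w i 0).

Section DiagonalConjugation.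
Variables (n : nat) (s : 'I_n -> C).
Hypothesis s_neq0 : forall i, s i != 0.

Lemma dconjM Y Z : dconj s (Y *m Z) = dconj s Y *m dconj s Z.
Proof.
apply/matrixP => i j; rewrite !mxE mulr_sumr mulr_suml; apply: eq_bigr => l _.
by rewrite !mxE; field; rewrite !s_neq0.
Qed.

Lemma dconj1 : dconj s 1%:M = 1%:M.
Proof.
apply/matrixP => i j; rewrite !mxE; case: eqP => [->|_]; last by rewrite mulr0 mul0r.
by rewrite mulr1 divrr // unitfE.
Qed.

Lemma dconj_mxprod (F : nat -> 'M[C]_n) m :
  dconj s (mxprod F m) = mxprod (fun j => dconj s (F j)) m.
Proof. by elim: m => [|m IH] /=; rewrite ?dconj1 // dconjM IH. Qed.

Lemma dconj_eigen (X : 'M[C]_n) (g : 'cV[C]_n) (x c : C) : X *m g = x *: g ->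
  (c *: dconj s X) *m dscale s g = (c * x) *: dscale s g.
Proof.
move=> /matrixP Xg; apply/matrixP => i z; rewrite (ord1 z) !mxE.
have := Xg i 0; rewrite !mxE => Xgi.
have -> : \sum_j (c *: dconj s X) i j * dscale s g j 0 = c * s i * \sum_j X i j * g j 0.
  by rewrite mulr_sumr; apply: eq_bigr => j _; rewrite !mxE; field; rewrite s_neq0.
by rewrite Xgi; ring.
Qed.

Lemma dscale_eq0 (w : 'cV[C]_n) : (dscale s w == 0) = (w == 0).
Proof.
apply/eqP/eqP => [/matrixP w0|->]; last by apply/matrixP => i z; rewrite !mxE mulr0.
apply/matrixP => i z; rewrite (ord1 z) !mxE; have := w0 i 0.
by rewrite !mxE => /eqP; rewrite mulf_eq0 (negbTE (s_neq0 i)) => /eqP.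
Qed.

End DiagonalConjugation.
End MatrixLimits.

Section ChainBound.
Variable R : realFieldType.

Lemma le_sum_of_chain (N : nat) (p : 'I_N -> 'I_N) (l : 'I_N) (W : 'I_N -> R) (K D : R) :
  (forall i, exists2 n, (n <= N)%N & iter n p i = l) ->
  1 <= K -> 0 <= D -> (forall i, 0 <= W i) ->
  (forall i, W i <= K * W (p i) + K * D * \sum_j W j) ->
  D * (2 * N%:R ^+ 2 * K ^+ N) < 1 ->
  \sum_j W j <= 2 * N%:R * K ^+ N * W l.
Proof.
move=> reach K1 D0 W0 step small; set S := \sum_j W j.
have S0 : 0 <= S by apply: sumr_ge0.
have DS0 : 0 <= D * S by apply: mulr_ge0.
have chain n i : iter n p i = l -> W i <= K ^+ n * W l + n%:R * K ^+ n * (D * S).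
  elim: n i => [|n IH] i; first by move=> /= ->; rewrite expr0 mul1r mul0r mul0r addr0.
  rewrite iterSr => /IH le_pi; have := step i; rewrite exprS mulrS -mulrA.
  have K0 : 0 <= K by lra.
  have le_Kpi := ler_wpM2l K0 le_pi.
  have : K * (D * S) <= K * K ^+ n * (D * S).
    by rewrite -mulrA ler_wpM2l // ler_peMl // exprn_ege1.
  move: le_Kpi; move: (K ^+ n) (n%:R : R) (D * S) (W (p i)) (W i) => *; nra.
have bound i : W i <= K ^+ N * W l + N%:R * K ^+ N * (D * S).
  have [n nN /chain le_n] := reach i; apply: le_trans le_n _.
  have KnN : K ^+ n <= K ^+ N by rewrite ler_weXn2l.
  have nN' : n%:R <= N%:R :> R by rewrite ler_nat.
  have Kn0 : 0 <= K ^+ n by rewrite exprn_ge0 // (le_trans ler01).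
  by rewrite lerD ?ler_wpM2r // ler_pM.
have : S <= \sum_(j < N) (K ^+ N * W l + N%:R * K ^+ N * (D * S)).
  by apply: ler_sum => j _; apply: bound.
rewrite sumr_const card_ord -[_ *+ N]mulr_natl.
set q := N%:R ^+ 2 * K ^+ N * D.
have -> : N%:R * (K ^+ N * W l + N%:R * K ^+ N * (D * S)) = N%:R * K ^+ N * W l + S * q.
  by rewrite /q; ring.
have q2 : 2 * q < 1.
  by have -> : 2 * q = D * (2 * N%:R ^+ 2 * K ^+ N) by rewrite /q; ring.
have Sq : 2 * (S * q) <= S by rewrite mulrCA ler_piMr // ltW.
by rewrite -/S; lra.
Qed.

End ChainBound.

Lemma colvec_ratio_le (R : realType) n (v : 'cV[R[i]]_n) l (B : R) : v != 0 -> 0 < B ->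
  \sum_j normc (v j 0) <= B * normc (v l 0) ->
  v l 0 != 0 /\ forall j, normc (v j 0 / v l 0) <= B.
Proof.
move=> v_neq0 B_gt0 S_le; have S_gt0 : 0 < \sum_j normc (v j 0).
  rewrite lt_def sumr_ge0 ?andbT => [|j _]; last exact: normc_ge0.
  apply: contra v_neq0 => /eqP S0; apply/eqP/matrixP => j z; rewrite (ord1 z) mxE.
  apply/eqP; rewrite -normc_eq0 eq_le normc_ge0 andbT -S0.
  by apply: ler_sum_term => j'; apply: normc_ge0.
have vl_gt0 : 0 < normc (v l 0) by move: (lt_le_trans S_gt0 S_le); rewrite pmulr_rgt0.
split=> [|j]; first by rewrite -normc_gt0.
rewrite normcM normcV ler_pdivrMr //; apply: le_trans S_le.
by apply: ler_sum_term => j'; apply: normc_ge0.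
Qed.

Section EigenvectorPerturbation.
Variable R : realType.
Local Notation C := R[i].
Variables (N : nat) (p : 'I_N -> 'I_N) (l : 'I_N).
Variables (A : C -> 'M[C]_N) (A0 : 'M[C]_N) (mu : C -> C) (mu0 : C) (w : C -> 'cV[C]_N).
Hypothesis A0_supp : forall i j, j != p i -> A0 i j = 0.

Lemma eigen_row k i : A k *m w k = mu k *: w k ->
  mu k * w k i 0 = A0 i (p i) * w k (p i) 0 + \sum_j (A k i j - A0 i j) * w k j 0.
Proof.
move=> /matrixP /(_ i 0); rewrite !mxE => <-.
have -> : \sum_j A k i j * w k j 0 =
    \sum_j A0 i j * w k j 0 + \sum_j (A k i j - A0 i j) * w k j 0.
  by rewrite -big_split /=; apply: eq_bigr => j _; ring.
by rewrite (bigD1 (p i)) //= big1 ?addr0 // => j /A0_supp ->; rewrite mul0r.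
Qed.

Lemma eigen_row_le k i : A k *m w k = mu k *: w k ->
  normc (mu k) * normc (w k i 0) <=
  normc (A0 i (p i)) * normc (w k (p i) 0) + l1dist (A k) A0 * \sum_j normc (w k j 0).
Proof.
move=> /(eigen_row i); rewrite -normcM => ->; rewrite -normcM.
apply: le_trans (le_normcD _ _) _; rewrite lerD2l.
apply: le_trans (normc_sumM_le _ (fun j => ler_sum_term j (fun j => normc_ge0 _))) _.
by rewrite ler_wpM2r ?row_l1dist_le // sumr_ge0 // => j _; apply: normc_ge0.
Qed.

Lemma eigen_row_chain k (K : R) : A k *m w k = mu k *: w k ->
  (forall i, normc (A0 i (p i)) <= K * normc (mu k)) -> 1 <= K * normc (mu k) ->
  forall i, normc (w k i 0) <=
    K * normc (w k (p i) 0) + K * l1dist (A k) A0 * \sum_j normc (w k j 0).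
Proof.
move=> eig c_le one_le i; have mu_gt0 : 0 < normc (mu k).
  by rewrite lt_def normc_ge0 andbT; apply: contraTneq one_le => ->; rewrite mulr0 ler10.
rewrite -(ler_pM2l mu_gt0); apply: le_trans (eigen_row_le i eig) _.
rewrite -mulrA [X in _ <= X](_ : _ = K * normc (mu k) * normc (w k (p i) 0) +
  K * normc (mu k) * (l1dist (A k) A0 * \sum_j normc (w k j 0))); last by ring.
rewrite lerD ?ler_wpM2r ?normc_ge0 // ler_peMl // mulr_ge0 ?l1dist_ge0 //.
by apply: sumr_ge0 => j _; apply: normc_ge0.
Qed.

Hypotheses (mu0_neq0 : mu0 != 0) (A_lim : mxlim0 A A0) (mu_lim : lim0 mu mu0).
Hypothesis reach_l : forall i, exists2 n, (n <= N)%N & iter n p i = l.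
Hypothesis w_eigen : ev0 (fun k => w k != 0 /\ A k *m w k = mu k *: w k).

Lemma eigvec_ratio_bounded : exists2 B : R, 0 < B & ev0 (fun k =>
  [/\ w k l 0 != 0, mu k != 0, A k *m w k = mu k *: w k &
      forall j, normc (w k j 0 / w k l 0) <= B]).
Proof.
pose m0 := normc mu0 / 2; have m0_gt0 : 0 < m0 by rewrite divr_gt0 // normc_gt0.
have mu_ge : ev0 (fun k => m0 <= normc (mu k)).
  apply: ev0W (mu_lim m0_gt0) => k hk.
  by have := normc_lerB mu0 (mu k); rewrite distcC /m0 in hk *; lra.
pose c := \sum_i normc (A0 i (p i)).
have c0 : 0 <= c by apply: sumr_ge0 => i _; apply: normc_ge0.
pose K := (c + 1) / m0 + 1.
have K1 : 1 <= K by rewrite lerDr divr_ge0 ?ltW //; lra.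
have Km0 : K * m0 = c + 1 + m0 by rewrite /K mulrDl divfK ?gt_eqF // mul1r.
have c_le i : normc (A0 i (p i)) <= K * m0.
  have := @ler_sum_term _ _ (fun i => normc (A0 i (p i))) i (fun i => normc_ge0 _).
  by rewrite Km0 -/c; lra.
have one_le : 1 <= K * m0 by rewrite Km0; lra.
have N_gt0 : 0 < N%:R :> R by rewrite ltr0n (leq_ltn_trans (leq0n l) (ltn_ord l)).
have KN_gt0 : 0 < K ^+ N by rewrite exprn_gt0 // (lt_le_trans ltr01).
pose eps := (2 * N%:R ^+ 2 * K ^+ N)^-1.
have eps_gt0 : 0 < eps by rewrite /eps invr_gt0 !mulr_gt0 // exprn_gt0.
have B_gt0 : 0 < 2 * N%:R * K ^+ N by rewrite !mulr_gt0.
exists (2 * N%:R * K ^+ N) => //.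
apply: ev0W (ev0_and w_eigen (ev0_and mu_ge (l1dist_lim0 A_lim eps_gt0))).
move=> k [[w_neq0 eig] [muk dk]].
have Kmu : K * m0 <= K * normc (mu k) by rewrite ler_wpM2l //; lra.
have step := eigen_row_chain eig (fun i => le_trans (c_le i) Kmu) (le_trans one_le Kmu).
have small : l1dist (A k) A0 * (2 * N%:R ^+ 2 * K ^+ N) < 1.
  by rewrite -ltr_pdivlMr ?mul1r // !mulr_gt0 // exprn_gt0.
have [wl bound] := colvec_ratio_le w_neq0 B_gt0
  (le_sum_of_chain reach_l K1 (l1dist_ge0 _ _) (fun j => normc_ge0 _) step small).
by split; rewrite // -normc_gt0; lra.
Qed.

Lemma eigvec_ratio_step i L : lim0 (fun k => w k (p i) 0 / w k l 0) L ->
  lim0 (fun k => w k i 0 / w k l 0) (A0 i (p i) * L / mu0).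
Proof.
move=> hL; have [B B_gt0 hB] := eigvec_ratio_bounded.
pose E k := \sum_j (A k i j - A0 i j) * (w k j 0 / w k l 0).
have E_lim : lim0 E 0.
  apply: (lim0_le (b := fun k => l1dist (A k) A0 * B)).
    move=> e e0; apply: ev0W (l1dist_lim0 A_lim (divr_gt0 e0 B_gt0)) => k.
    by rewrite ltr_pdivlMr.
  apply: ev0W hB => k [_ _ _ bnd]; rewrite subr0; apply: le_trans (normc_sumM_le _ bnd) _.
  by rewrite ler_wpM2r ?row_l1dist_le ?ltW.
have := lim0M (lim0D (lim0M (lim0_cst (A0 i (p i))) hL) E_lim) (lim0V mu0_neq0 mu_lim).
rewrite addr0; apply: lim0_ev; apply: ev0W hB => k [wl muk eig _].
have -> : E k = (\sum_j (A k i j - A0 i j) * w k j 0) / w k l 0.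
  by rewrite /E mulr_suml; apply: eq_bigr => j _; rewrite mulrA.
rewrite (_ : \sum_j _ = mu k * w k i 0 - A0 i (p i) * w k (p i) 0).
  by field; rewrite wl muk.
by rewrite (eigen_row i eig); ring.
Qed.

Lemma eigvec_ratio_self : lim0 (fun k => w k l 0 / w k l 0) 1.
Proof.
have [B _ hB] := eigvec_ratio_bounded; apply: lim0_ev (lim0_cst 1).
by apply: ev0W hB => k [wl _ _ _]; rewrite divff.
Qed.

Lemma eigvec_ratio_cvg i : exists L, lim0 (fun k => w k i 0 / w k l 0) L.
Proof.
have [n _] := reach_l i; elim: n i => [|n IH] i.
  by move=> /= ->; exists 1; apply: eigvec_ratio_self.
rewrite iterSr => /IH [L hL]; exists (A0 i (p i) * L / mu0); exact: eigvec_ratio_step.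
Qed.

Lemma eigvec_ratio_lim_neq0 : (forall i, exists n, iter n p l = i) ->
  forall i L, lim0 (fun k => w k i 0 / w k l 0) L -> L != 0.
Proof.
move=> reach_from i L; have [n <-] := reach_from i; elim: n L => [|n IH] L /= hL.
  by rewrite -(lim0_unique eigvec_ratio_self hL) oner_neq0.
have [L' hL'] := eigvec_ratio_cvg (iter n p l); apply: contraNneq (IH _ hL') => L0.
by rewrite (lim0_unique hL' (eigvec_ratio_step hL)) L0 mulr0 mul0r.
Qed.

Lemma eigvec_ratio_lim1 : (forall i, A0 i (p i) = mu0) ->
  forall i, lim0 (fun k => w k i 0 / w k l 0) 1.
Proof.
move=> weights i; have [n _] := reach_l i; elim: n i => [|n IH] i.
  by move=> /= ->; apply: eigvec_ratio_self.
rewrite iterSr => /IH /eigvec_ratio_step; rewrite weights mulr1 divff //; exact.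
Qed.

End EigenvectorPerturbation.

Section CyclicShift.
Variable N : nat.

Lemma val_iter_ordS n (i : 'I_N) : val (iter n (@ordS N) i) = ((i + n) %% N)%N.
Proof.
elim: n => [|n IH] /=; first by rewrite addn0 modn_small.
by rewrite IH -addn1 modnDml addn1 addnS.
Qed.

(* The points i + n m, n < N, are distinct mod N by Gauss's lemma. *)
Lemma iter_ordS_reach m : coprime N m ->
  forall i j : 'I_N, exists2 n, (n < N)%N & iter n (iter m (@ordS N)) i = j.
Proof.
move=> coNm i j; pose f (n : 'I_N) := iter n (iter m (@ordS N)) i.
suff /injF_onto/(_ j)/codomP[n ->] : injective f by exists n.
have le_inj (n1 n2 : 'I_N) : (n1 <= n2)%N -> f n1 = f n2 -> n1 = n2.
  move=> le12 /(congr1 val); rewrite /f -!iterM !val_iter_ordS => /esym/eqP.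
  rewrite eqn_modDl eqn_mod_dvd ?leq_mul2r ?le12 ?orbT // -mulnBl Gauss_dvdl //.
  move=> /dvdn_leq dvd; apply/val_inj/eqP; rewrite eqn_leq le12 leqNgt.
  apply/negP => lt12; have : (N <= n2 - n1)%N by apply: dvd; rewrite subn_gt0.
  by rewrite leqNgt (leq_ltn_trans (leq_subr _ _) (ltn_ord n2)).
by move=> n1 n2; case: (leqP n1 n2) => [|/ltnW] le12 f12; [|apply/esym]; apply: le_inj.
Qed.

End CyclicShift.

Section LaxMatrices.
Variable R : realType.
Local Notation C := R[i].
Variable N : nat.
Hypothesis N_gt0 : (0 < N)%N.

Lemma eq_ordS (i j : 'I_N) :
  (j == ordS i) = (j == i.+1 :> nat) || ((i == N.-1 :> nat) && (j == 0 :> nat)).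
Proof.
rewrite -val_eqE /=; have [iN|] := ltnP i.+1 N.
  have -> : (i == N.-1 :> nat) = false by apply/eqP => e; move: iN; rewrite e prednK ?ltnn.
  by rewrite modn_small // orbF.
move=> Ni; have -> : (i : nat) = N.-1.
  by apply/eqP; rewrite -eqSS prednK // eqn_leq ltn_ord Ni.
by rewrite prednK // modnn eqxx [j == N :> nat]ltn_eqF.
Qed.

Lemma natr_eq_ordS (i j : 'I_N) : (j == ordS i)%:R =
  (j == i.+1 :> nat)%:R + ((i == N.-1 :> nat) && (j == 0 :> nat))%:R :> C.
Proof.
rewrite eq_ordS; case: eqP => [ji|_]; last by rewrite add0r.
by rewrite ji /= andbF addr0.
Qed.

Definition fun_mx (f : 'I_N -> 'I_N) : 'M[C]_N := \matrix_(i, j) (j == f i)%:R.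

Lemma mxprod_fun_mx f m : mxprod (fun _ => fun_mx f) m = fun_mx (iter m f).
Proof.
elim: m => [|m IH] /=; first by apply/matrixP => i j; rewrite !mxE eq_sym.
apply/matrixP => i j; rewrite IH !mxE (bigD1 (f i)) //= big1 => [|l /negbTE fil].
  by rewrite !mxE eqxx mul1r addr0 -iterSr.
by rewrite !mxE fil mul0r.
Qed.

Lemma Rprod_mxprod (I : int -> int -> C) t m y :
  Rprod N I t m y = mxprod (fun j => Rmat N I (t + j%:Z) y) m.
Proof. by elim: m => //= m ->. Qed.

Definition kpow (k : C) (i : 'I_N) : C := k ^+ i.+1.

Lemma kpow_neq0 k i : k != 0 -> kpow k i != 0.
Proof. by move=> k0; rewrite expf_neq0. Qed.

End LaxMatrices.

Section AroundP.
Variable R : realType.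
Local Notation C := R[i].
Variables (N : nat) (I V : int -> int -> C) (t : int) (y : C -> C).
Hypotheses (N_gt0 : (0 < N)%N) (y_lim : lim0 (fun k => k ^+ N * y k) 1).

Lemma Rmat_limP tau :
  mxlim0 (fun k => k *: dconj (kpow k) (Rmat N I tau (y k))) (fun_mx R (@ordS N)).
Proof.
move=> i j; apply: (@lim0_ext _ _ (fun k =>
   (i == j)%:R * (k * I (i.+1)%:Z tau * k ^+ i.+1 / k ^+ j.+1)
 + (j == i.+1 :> nat)%:R * (k * k ^+ i.+1 / k ^+ j.+1)
 + ((i == N.-1 :> nat) && (j == 0 :> nat))%:R * (k * y k * k ^+ i.+1 / k ^+ j.+1))).
  by move=> k _; rewrite !mxE /kpow; ring.
have -> : fun_mx R (@ordS N) i j = (i == j)%:R * 0 + (j == i.+1 :> nat)%:R * 1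
    + ((i == N.-1 :> nat) && (j == 0 :> nat))%:R * 1.
  by rewrite mxE natr_eq_ordS // mulr0 !mulr1 add0r.
apply: lim0D; first apply: lim0D; apply: lim0_indicator.
- move=> /eqP <-; have := lim0M lim0_id (lim0_cst (I (i.+1)%:Z tau)); rewrite mul0r.
  by apply: lim0_ext => k k0; field; rewrite expf_neq0.
- move=> /eqP ->; apply: lim0_ext (lim0_cst 1) => k k0.
  by rewrite [k ^+ i.+2]exprS; field; rewrite k0 expf_neq0.
- move=> /andP[/eqP -> /eqP ->]; rewrite prednK //.
  by apply: lim0_ext y_lim => k k0; rewrite expr1; field.
Qed.

Lemma Lmat_limP : mxlim0 (fun k => dconj (kpow k) (Lmat N V t (y k))) 1%:M.
Proof.
move=> i j; apply: (@lim0_ext _ _ (fun k =>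
   (i == j)%:R * (k ^+ i.+1 / k ^+ j.+1)
 + (i == j.+1 :> nat)%:R * (k ^+ i.+1 * V (j.+1)%:Z t / k ^+ j.+1)
 + ((i == 0 :> nat) && (j == N.-1 :> nat))%:R * (k ^+ i.+1 * (V N%:Z t / y k) / k ^+ j.+1))).
  by move=> k _; rewrite !mxE /kpow; ring.
have -> : (1%:M : 'M[C]_N) i j = (i == j)%:R * 1 + (i == j.+1 :> nat)%:R * 0
    + ((i == 0 :> nat) && (j == N.-1 :> nat))%:R * 0.
  by rewrite mxE !mulr0 mulr1 !addr0.
apply: lim0D; first apply: lim0D; apply: lim0_indicator.
- move=> /eqP <-; apply: lim0_ext (lim0_cst 1) => k k0.
  by rewrite divff // expf_neq0.
- move=> /eqP ->; have := lim0M (lim0_cst (V (j.+1)%:Z t)) lim0_id; rewrite mulr0.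
  by apply: lim0_ext => k k0; rewrite [k ^+ j.+2]exprS; field; rewrite expf_neq0.
- move=> /andP[/eqP -> /eqP ->]; rewrite prednK //.
  have := lim0M (lim0M (lim0_cst (V N%:Z t)) lim0_id) (lim0V (oner_neq0 _) y_lim).
  rewrite mulr0 mul0r; apply: lim0_ext => k k0.
  by rewrite invfM expr1; move: (y k)^-1 => z; field; rewrite expf_neq0.
Qed.

Lemma Xmat_limP M : mxlim0 (fun k => k ^+ M *: dconj (kpow k) (Xmat N M I V t (y k)))
  (fun_mx R (iter M (@ordS N))).
Proof.
rewrite -mxprod_fun_mx -[mxprod _ _]mul1mx.
have := @mxlim0_prod _ _ (fun k j => k *: dconj (kpow k) (Rmat N I (t + j%:Z) (y k)))
  _ M (fun j => Rmat_limP _).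
move=> /(mxlim0M Lmat_limP); apply: mxlim0_ext => k k0.
by rewrite /Xmat Rprod_mxprod dconjM ?dconj_mxprod => [|i|i]; rewrite ?kpow_neq0 // -scale_mxprod scalemxAr.
Qed.

End AroundP.

Lemma eigvec_ratio_at_P (R : realType) (N M : nat) (I V : int -> int -> R[i]) (t : int)
  (x y : R[i] -> R[i]) (g : R[i] -> 'cV[R[i]]_N) :
  (0 < N)%N -> coprime N M ->
  lim_at0 (fun k => k ^+ M * x k) 1 -> lim_at0 (fun k => k ^+ N * y k) 1 ->
  eigvec_near0 M I V t x y g -> forall j : 'I_N,
  lim_at0 (fun k => g k j 0 / g k (ord_last j) 0 / k ^+ (N - j.+1)) 1.
Proof.
move=> N_gt0 coNM /lim_at0E x_lim /lim_at0E y_lim /near0E g_eig j; apply/lim_at0E.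
pose p := iter M (@ordS N).
have reach i : exists2 n, (n <= N)%N & iter n p i = ord_last j.
  by have [n /ltnW] := iter_ordS_reach coNM i (ord_last j); exists n.
have w_eig : ev0 (fun k => dscale (kpow k) (g k) != 0 /\
    (k ^+ M *: dconj (kpow k) (Xmat N M I V t (y k))) *m dscale (kpow k) (g k) =
    (k ^+ M * x k) *: dscale (kpow k) (g k)).
  apply: ev0W (ev0_and g_eig ev0_neq0) => k [[gk eig] k0].
  have sk (i : 'I_N) : kpow k i != 0 by apply: kpow_neq0.
  by rewrite dscale_eq0 // (dconj_eigen sk _ eig).
have supp i j' : j' != p i -> fun_mx R p i j' = 0 by rewrite mxE => /negbTE ->.
have weights i : fun_mx R p i (p i) = 1 by rewrite mxE eqxx.
have := eigvec_ratio_lim1 supp (oner_neq0 _) (Xmat_limP I V t N_gt0 y_lim M) x_lim reach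
  w_eig weights j.
apply: lim0_ext => k k0; rewrite !mxE /kpow /= prednK //.
have -> : k ^+ N = k ^+ j.+1 * k ^+ (N - j.+1) by rewrite -exprD subnKC.
rewrite !invfM; move: (g k (ord_last j) 0)^-1 => z.
by field; rewrite !expf_neq0.
Qed.

Section AroundQ.
Variable R : realType.
Local Notation C := R[i].
Variables (N : nat) (I V : int -> int -> C) (t : int) (y : C -> C) (b : C).
Hypotheses (N_gt0 : (0 < N)%N) (b_neq0 : b != 0) (y_lim : lim0 (fun k => y k / k ^+ N) b).

Definition Idiag tau : 'M[C]_N := diag_mx (\row_i I (i.+1)%:Z tau).

Definition Vcycle : 'M[C]_N := \matrix_(i, j)
  ((i == j.+1 :> nat)%:R * V (j.+1)%:Z t
   + ((i == 0 :> nat) && (j == N.-1 :> nat))%:R * (V N%:Z t / b)).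

Lemma Rmat_limQ tau : mxlim0 (fun k => dconj (kpow k^-1) (Rmat N I tau (y k))) (Idiag tau).
Proof.
move=> i j; apply: (@lim0_ext _ _ (fun k =>
   (i == j)%:R * (I (i.+1)%:Z tau * (k ^+ i.+1)^-1 / (k ^+ j.+1)^-1)
 + (j == i.+1 :> nat)%:R * ((k ^+ i.+1)^-1 / (k ^+ j.+1)^-1)
 + ((i == N.-1 :> nat) && (j == 0 :> nat))%:R * (y k * (k ^+ i.+1)^-1 / (k ^+ j.+1)^-1))).
  by move=> k _; rewrite !mxE /kpow !exprVn; ring.
have -> : Idiag tau i j = (i == j)%:R * I (i.+1)%:Z tau + (j == i.+1 :> nat)%:R * 0
    + ((i == N.-1 :> nat) && (j == 0 :> nat))%:R * 0.
  by rewrite !mxE !mulr0 !addr0 mulrC mulr_natr.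
apply: lim0D; first apply: lim0D; apply: lim0_indicator.
- move=> /eqP <-; apply: lim0_ext (lim0_cst _) => k k0.
  by field; rewrite expf_neq0.
- move=> /eqP ->; apply: lim0_ext lim0_id => k k0.
  by rewrite [k ^+ i.+2]exprS; field; rewrite k0 expf_neq0.
- move=> /andP[/eqP -> /eqP ->]; rewrite prednK //.
  have := lim0M y_lim lim0_id; rewrite mulr0.
  by apply: lim0_ext => k k0; rewrite expr1; field; rewrite expf_neq0.
Qed.

Lemma Lmat_limQ : mxlim0 (fun k => k *: dconj (kpow k^-1) (Lmat N V t (y k))) Vcycle.
Proof.
move=> i j; apply: (@lim0_ext _ _ (fun k =>
   (i == j)%:R * (k * (k ^+ i.+1)^-1 / (k ^+ j.+1)^-1)
 + (i == j.+1 :> nat)%:R * (k * (k ^+ i.+1)^-1 * V (j.+1)%:Z t / (k ^+ j.+1)^-1)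
 + ((i == 0 :> nat) && (j == N.-1 :> nat))%:R *
     (k * (k ^+ i.+1)^-1 * (V N%:Z t / y k) / (k ^+ j.+1)^-1))).
  by move=> k _; rewrite !mxE /kpow !exprVn; ring.
have -> : Vcycle i j = (i == j)%:R * 0 + (i == j.+1 :> nat)%:R * V (j.+1)%:Z t
    + ((i == 0 :> nat) && (j == N.-1 :> nat))%:R * (V N%:Z t / b).
  by rewrite mxE mulr0 add0r.
apply: lim0D; first apply: lim0D; apply: lim0_indicator.
- move=> /eqP <-; apply: lim0_ext lim0_id => k k0.
  by field; rewrite expf_neq0.
- move=> /eqP ->; apply: lim0_ext (lim0_cst _) => k k0.
  by rewrite [k ^+ j.+2]exprS; field; rewrite k0 expf_neq0.
- move=> /andP[/eqP -> /eqP ->]; rewrite prednK //.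
  have := lim0M (lim0_cst (V N%:Z t)) (lim0V b_neq0 y_lim).
  apply: lim0_ext => k k0; rewrite expr1 invf_div.
  by move: (y k)^-1 => z; field; rewrite k0 expf_neq0.
Qed.

Lemma Xmat_limQ M : mxlim0 (fun k => k *: dconj (kpow k^-1) (Xmat N M I V t (y k)))
  (Vcycle *m mxprod (fun j => Idiag (t + j%:Z)) M).
Proof.
have := @mxlim0_prod _ _ (fun k j => dconj (kpow k^-1) (Rmat N I (t + j%:Z) (y k)))
  _ M (fun j => Rmat_limQ _).
move=> /(mxlim0M Lmat_limQ); apply: mxlim0_ext => k k0.
by rewrite /Xmat Rprod_mxprod dconjM ?dconj_mxprod => [|i|i];
  rewrite ?kpow_neq0 ?invr_eq0 // scalemxAl.
Qed.

Lemma Xmat_limQ_supp M i j : j != iter N.-1 (@ordS N) i ->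
  (Vcycle *m mxprod (fun j => Idiag (t + j%:Z)) M) i j = 0.
Proof.
have [e ->] : exists e, mxprod (fun j => Idiag (t + j%:Z)) M = diag_mx e.
  elim: M => [|M [e IH]] /=; first by exists (const_mx 1); rewrite diag_const_mx.
  by rewrite IH mulmx_diag; eexists.
rewrite mul_mx_diag mxE => ji; apply/eqP; rewrite mulf_eq0 mxE; apply/orP; left.
have /negbTE : i != ordS j.
  apply: contra ji => /eqP ->; rewrite -iterSr prednK //.
  by rewrite -val_eqE val_iter_ordS modnDr modn_small.
rewrite eq_ordS // => /norP[/negbTE -> corner].
by rewrite andbC (negbTE corner) !mul0r addr0.
Qed.

End AroundQ.

Lemma eigvec_ratio_at_Q (R : realType) (N M : nat) (I V : int -> int -> R[i]) (t : int)
  (x y : R[i] -> R[i]) (g : R[i] -> 'cV[R[i]]_N) (a b : R[i]) :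
  (0 < N)%N -> a != 0 -> b != 0 ->
  lim_at0 (fun k => k * x k) a -> lim_at0 (fun k => y k / k ^+ N) b ->
  eigvec_near0 M I V t x y g -> forall j : 'I_N, exists c : R[i], 0 < c /\
  lim_at0 (fun k => `|g k j 0 / g k (ord_last j) 0| * `|k| ^+ (N - j.+1)) c.
Proof.
move=> N_gt0 a_neq0 b_neq0 /lim_at0E x_lim /lim_at0E y_lim /near0E g_eig j.
pose p := iter N.-1 (@ordS N).
have coN : coprime N N.-1 by rewrite -{1}(prednK N_gt0) coprimeSn.
have reach i : exists2 n, (n <= N)%N & iter n p i = ord_last j.
  by have [n /ltnW] := iter_ordS_reach coN i (ord_last j); exists n.
have reach_from i : exists n, iter n p (ord_last j) = i.
  by have [n _] := iter_ordS_reach coN (ord_last j) i; exists n.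
have w_eig : ev0 (fun k => dscale (kpow k^-1) (g k) != 0 /\
    (k *: dconj (kpow k^-1) (Xmat N M I V t (y k))) *m dscale (kpow k^-1) (g k) =
    (k * x k) *: dscale (kpow k^-1) (g k)).
  apply: ev0W (ev0_and g_eig ev0_neq0) => k [[gk eig] k0].
  have sk (i : 'I_N) : kpow k^-1 i != 0 by rewrite kpow_neq0 ?invr_eq0.
  by rewrite dscale_eq0 // (dconj_eigen sk _ eig).
have supp := Xmat_limQ_supp I V t b N_gt0 M.
have A_lim := Xmat_limQ I V t N_gt0 b_neq0 y_lim M.
have [L hL] := eigvec_ratio_cvg supp a_neq0 A_lim x_lim reach w_eig j.
have L_neq0 := eigvec_ratio_lim_neq0 supp a_neq0 A_lim x_lim reach w_eig reach_from hL.
exists `|L|; split; first by rewrite normr_gt0.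
apply/lim_at0E; apply: lim0_ext (lim0_norm hL) => k k0.
rewrite !mxE /kpow /= prednK // !exprVn -normrX -normrM; congr `|_|.
have -> : k ^+ N = k ^+ j.+1 * k ^+ (N - j.+1) by rewrite -exprD subnKC.
rewrite !invfM; move: (g k (ord_last j) 0)^-1 => z.
by field; rewrite !expf_neq0.
Qed.

Theorem lemmaA1 (R : realType) (N M : nat) (I V : int -> int -> R[i]) (t : int) :
  (0 < N)%N -> (0 < M)%N -> coprime N M ->
  hpdToda N M I V ->
  affine_smooth (specF N M I V t) ->
  (forall (x y : R[i] -> R[i]) (g : R[i] -> 'cV[R[i]]_N),
     near0 (fun k => specF N M I V t (x k) (y k) = 0) ->
     lim_at0 (fun k => k ^+ M * x k) 1 ->
     lim_at0 (fun k => k ^+ N * y k) 1 ->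
     eigvec_near0 M I V t x y g ->
     forall j : 'I_N, (j.+1 < N)%N ->
       lim_at0 (fun k => g k j 0 / g k (ord_last j) 0 / k ^+ (N - j.+1)) 1)
  /\
  (forall (x y : R[i] -> R[i]) (g : R[i] -> 'cV[R[i]]_N) (a b : R[i]),
     a != 0 -> b != 0 ->
     near0 (fun k => specF N M I V t (x k) (y k) = 0) ->
     lim_at0 (fun k => k * x k) a ->
     lim_at0 (fun k => y k / k ^+ N) b ->
     eigvec_near0 M I V t x y g ->
     forall j : 'I_N, (j.+1 < N)%N ->
       exists c : R[i], 0 < c /\
         lim_at0 (fun k => `| g k j 0 / g k (ord_last j) 0 | * `|k| ^+ (N - j.+1)) c).
Proof.
move=> N_gt0 _ coNM _ _; split.
- by move=> x y g _ x_lim y_lim g_eig j _; apply: eigvec_ratio_at_P x_lim y_lim g_eig j.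
- move=> x y g a b a_neq0 b_neq0 _ x_lim y_lim g_eig j _.
  exact: eigvec_ratio_at_Q N_gt0 a_neq0 b_neq0 x_lim y_lim g_eig j.
Qed.
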